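(* Consider the system \[ \begin{aligned} \dot X_1^1&=\bigl(\mu_1(S_1^{in}-k_1X_1^1)-D_1\bigr)X_1^1,\quad \dot X_2^1=\bigl(\mu_2(S_2^{in}+k_2X_1^1-k_3X_2^1)-D_1\bigr)X_2^1,\\ \dot X_1^2&=D_2(X_1^1-X_1^2)+\mu_1(S_1^{in}-k_1X_1^2)X_1^2,\quad \dot X_2^2=D_2(X_2^1-X_2^2)+\mu_2(S_2^{in}+k_2X_1^2-k_3X_2^2)X_2^2, \end{aligned} \] with $\mu_1,\mu_2$ satisfying (H1), (H2), and assume the existence conditions of the respective steady state types hold. Then: \begin{itemize} \item The steady states of the types $\mathcal E_{00}^{kl}$, $\mathcal E_{10}^{1l}$ ($k=0,1$, $l=0,1,2$) and $\mathcal E_{01}^{01}$ are unique. \item There exists at least one steady state of the type $\mathcal E_{02}^{01}$; generically, the system has an odd number of steady states of the type $\mathcal E_{02}^{01}$. \item For $i=1,2$: if $X_2^{1*}>x_2^m$, the steady states of the types $\mathcal E_{0i}^{11}$ and $\mathcal E_{1i}^{11}$ are unique; if $X_2^{1*}<x_2^m$, there exists at least one steady state of the type $\mathcal E_{0i}^{11}$ and of the type $\mathcal E_{1i}^{11}$, and generically the system has an odd number of steady states of each of these types. Here $X_2^{1*}$ and $X_1^{2*}$ are the $X_2^1$- and $X_1^2$-components of the steady state considered and $x_2^m=(S_2^{in}+k_2X_1^{2*}-S_2^m)/k_3$. \end{itemize}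
   Context: Parameters $k_1,k_2,k_3>0$, $D>0$, $r\in(0,1)$, $r_1=r$, $r_2=1-r$, $D_1=D/r_1$, $D_2=D/r_2$, $S_1^{in},S_2^{in}\ge0$. (H1): $\mu_1\in C^1(\mathbb R_+)$, $\mu_1(0)=0$, $\mu_1(+\infty)=m_1$, $\mu_1'>0$ on $(0,\infty)$. (H2): $\mu_2\in C^1(\mathbb R_+)$, $\mu_2(0)=0$, $\mu_2(+\infty)=0$, and there is $S_2^m>0$ with $\mu_2'>0$ on $(0,S_2^m)$, $\mu_2'<0$ on $(S_2^m,\infty)$. For $i=1,2$: $\lambda_1^i$ solves $\mu_1(S)=D_i$ ($+\infty$ if $D\ge r_im_1$); $\lambda_2^{i1}\le\lambda_2^{i2}$ solve $\mu_2(S)=D_i$ ($+\infty$ if $D>r_i\mu_2(S_2^m)$); $F_{ij}=\lambda_1^i+\frac{k_1}{k_2}(\lambda_2^{ij}-S_2^{in})$. Steady state types (for $i=1,2$) with existence conditions: $\mathcal E_{00}^{00}=(0,0,0,0)$ (always); $\mathcal E_{00}^{0i}=(0,0,0,(S_2^{in}-\lambda_2^{2i})/k_3)$ ($S_2^{in}>\lambda_2^{2i}$); $\mathcal E_{00}^{10}=(0,0,(S_1^{in}-\lambda_1^2)/k_1,0)$ ($S_1^{in}>\lambda_1^2$); $\mathcal E_{00}^{1i}=(0,0,(S_1^{in}-\lambda_1^2)/k_1,k_2(S_1^{in}-F_{2i})/(k_1k_3))$ ($S_1^{in}>\max(\lambda_1^2,F_{2i})$); $\mathcal E_{10}^{10}=((S_1^{in}-\lambda_1^1)/k_1,0,X_1^{2*},0)$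 and $\mathcal E_{10}^{1i}=((S_1^{in}-\lambda_1^1)/k_1,0,X_1^{2*},(S_2^{in}+k_2X_1^{2*}-\lambda_2^{2i})/k_3)$, where $X_1^{2*}$ solves $\mu_1(S_1^{in}-k_1x)=D_2(x-X_1^{1*})/x$ with $X_1^{1*}=(S_1^{in}-\lambda_1^1)/k_1$ (exist iff $S_1^{in}>\lambda_1^1$, resp. additionally $S_2^{in}+k_2X_1^{2*}>\lambda_2^{2i}$); $\mathcal E_{0i}^{01}=(0,X_2^{1*},0,X_2^{2*})$ with $X_2^{1*}=(S_2^{in}-\lambda_2^{1i})/k_3$ and $X_2^{2*}$ a solution of $\mu_2(S_2^{in}-k_3x)=D_2(x-X_2^{1*})/x$ ($S_2^{in}>\lambda_2^{1i}$); $\mathcal E_{0i}^{11}=(0,X_2^{1*},X_1^{2*},X_2^{2*})$ with $X_2^{1*}=(S_2^{in}-\lambda_2^{1i})/k_3$, $X_1^{2*}=(S_1^{in}-\lambda_1^2)/k_1$, $X_2^{2*}$ a solution of $\mu_2(S_2^{in}+k_2X_1^{2*}-k_3x)=D_2(x-X_2^{1*})/x$ ($S_1^{in}>\lambda_1^2$, $S_2^{in}>\lambda_2^{1i}$); $\mathcal E_{1i}^{11}=(X_1^{1*},X_2^{1*},X_1^{2*},X_2^{2*})$ with $X_1^{1*}=(S_1^{in}-\lambda_1^1)/k_1$, $X_2^{1*}=k_2(S_1^{in}-F_{1i})/(k_1k_3)$, $X_1^{2*}$ solving $\mu_1(S_1^{in}-k_1x)=D_2(x-X_1^{1*})/x$,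 $X_2^{2*}$ a solution of $\mu_2(S_2^{in}+k_2X_1^{2*}-k_3x)=D_2(x-X_2^{1*})/x$ ($S_1^{in}>\max(\lambda_1^1,F_{1i})$). ''Type'' means the family of all steady states of the given form. *)

From Stdlib Require Import Reals Lra List ClassicalEpsilon.
From Coquelicot Require Import Coquelicot.
Open Scope R_scope.

Record params := Params {
  k1 : R; k2 : R; k3 : R; Dil : R; rr : R; S1in : R; S2in : R;
  mu1 : R -> R; mu2 : R -> R }.

(** r_1 = r, r_2 = 1 - r, D_1 = D/r_1, D_2 = D/r_2. *)
Definition D1 (p : params) : R := Dil p / rr p.
Definition D2 (p : params) : R := Dil p / (1 - rr p).

Definition params_ok (p : params) : Prop :=
  0 < k1 p /\ 0 < k2 p /\ 0 < k3 p /\ 0 < Dil p /\ 0 < rr p /\ rr p < 1 /\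
  0 <= S1in p /\ 0 <= S2in p.

(** f is C^1 on R_+ = [0, +oo): a derivative df exists on (0,+oo), df is
    continuous on (0,+oo), and f, df are right-continuous at 0 (so that the
    right derivative at 0 exists and equals df 0). *)
Definition C1_Rplus (f : R -> R) : Prop :=
  exists df : R -> R,
    (forall x, 0 < x -> is_derive f x (df x)) /\
    (forall x, 0 < x -> continuous df x) /\
    filterlim f (at_right 0) (locally (f 0)) /\
    filterlim df (at_right 0) (locally (df 0)).

Definition H1 (mu : R -> R) (m1 : R) : Prop :=
  C1_Rplus mu /\ mu 0 = 0 /\ is_lim mu p_infty (Finite m1) /\
  (forall x, 0 < x -> Derive mu x > 0).

Definition H2 (mu : R -> R) (S2m : R) : Prop :=
  C1_Rplus mu /\ mu 0 = 0 /\ is_lim mu p_infty (Finite 0) /\ 0 < S2m /\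
  (forall x, 0 < x < S2m -> Derive mu x > 0) /\
  (forall x, S2m < x -> Derive mu x < 0).

Definition steady (p : params) (x11 x21 x12 x22 : R) : Prop :=
  (mu1 p (S1in p - k1 p * x11) - D1 p) * x11 = 0 /\
  (mu2 p (S2in p + k2 p * x11 - k3 p * x21) - D1 p) * x21 = 0 /\
  D2 p * (x11 - x12) + mu1 p (S1in p - k1 p * x12) * x12 = 0 /\
  D2 p * (x21 - x22) + mu2 p (S2in p + k2 p * x12 - k3 p * x22) * x22 = 0.

(** State space: nonnegative biomasses and nonnegative substrate
    concentrations (the arguments of mu1, mu2, which are defined on R_+). *)
Definition in_domain (p : params) (x11 x21 x12 x22 : R) : Prop :=
  0 <= x11 /\ 0 <= x21 /\ 0 <= x12 /\ 0 <= x22 /\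
  0 <= S1in p - k1 p * x11 /\ 0 <= S2in p + k2 p * x11 - k3 p * x21 /\
  0 <= S1in p - k1 p * x12 /\ 0 <= S2in p + k2 p * x12 - k3 p * x22.

(** Break-even concentrations.  lambda_1 solves mu1(S) = Di; it is finite
    iff such a solution exists (otherwise it is +oo, encoded by the
    predicate [lam1_fin] being false). *)
Definition lam1_fin (p : params) (Di : R) : Prop :=
  exists S, 0 <= S /\ mu1 p S = Di.
Definition lam1 (p : params) (Di : R) : R :=
  epsilon (inhabits 0) (fun S => 0 <= S /\ mu1 p S = Di).

Inductive idx := i1 | i2.

(** lambda_2^{.1} <= lambda_2^{.2}: the smallest / largest solution of
    mu2(S) = Di ( +oo, i.e. [lam2_fin] false, if there is none). *)
Definition lam2_fin (p : params) (Di : R) : Prop :=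
  exists S, 0 <= S /\ mu2 p S = Di.
Definition lam2 (p : params) (j : idx) (Di : R) : R :=
  match j with
  | i1 => epsilon (inhabits 0) (fun S => 0 <= S /\ mu2 p S = Di /\
             forall S', 0 <= S' -> mu2 p S' = Di -> S <= S')
  | i2 => epsilon (inhabits 0) (fun S => 0 <= S /\ mu2 p S = Di /\
             forall S', 0 <= S' -> mu2 p S' = Di -> S' <= S)
  end.

Definition Dlev (p : params) (l : idx) : R :=
  match l with i1 => D1 p | i2 => D2 p end.

Definition F (p : params) (l j : idx) : R :=
  lam1 p (Dlev p l) + k1 p / k2 p * (lam2 p j (Dlev p l) - S2in p).

Definition X11s (p : params) : R := (S1in p - lam1 p (D1 p)) / k1 p.

Definition X12_eq (p : params) (x : R) : Prop :=
  0 < x /\ 0 <= S1in p - k1 p * x /\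
  mu1 p (S1in p - k1 p * x) = D2 p * (x - X11s p) / x.

Definition X12s_10 (p : params) : R := epsilon (inhabits 0) (X12_eq p).

Definition X22_eq (p : params) (b c x : R) : Prop :=
  0 < x /\ mu2 p (S2in p + k2 p * c - k3 p * x) = D2 p * (x - b) / x.

(** Steady state types.  Naming: E_{ab}^{cd}; an index argument i gives the
    position that ranges over {1,2}. *)
Inductive stype :=
| E00_00
| E00_0 (i : idx)
| E00_10
| E00_1 (i : idx)
| E10_10
| E10_1 (i : idx)
| E0_01 (i : idx)
| E0_11 (i : idx)
| E1_11 (i : idx).

(** Existence conditions of the types (lambda = +oo makes them false). *)
Definition exist_cond (p : params) (T : stype) : Prop :=
  match T with
  | E00_00 => True
  | E00_0 i => lam2_fin p (D2 p) /\ S2in p > lam2 p i (D2 p)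
  | E00_10 => lam1_fin p (D2 p) /\ S1in p > lam1 p (D2 p)
  | E00_1 i => lam1_fin p (D2 p) /\ lam2_fin p (D2 p) /\
               S1in p > lam1 p (D2 p) /\ S1in p > F p i2 i
  | E10_10 => lam1_fin p (D1 p) /\ S1in p > lam1 p (D1 p)
  | E10_1 i => lam1_fin p (D1 p) /\ S1in p > lam1 p (D1 p) /\
               lam2_fin p (D2 p) /\
               S2in p + k2 p * X12s_10 p > lam2 p i (D2 p)
  | E0_01 i => lam2_fin p (D1 p) /\ S2in p > lam2 p i (D1 p)
  | E0_11 i => lam1_fin p (D2 p) /\ S1in p > lam1 p (D2 p) /\
               lam2_fin p (D1 p) /\ S2in p > lam2 p i (D1 p)
  | E1_11 i => lam1_fin p (D1 p) /\ lam2_fin p (D1 p) /\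
               S1in p > lam1 p (D1 p) /\ S1in p > F p i1 i
  end.

Definition form (p : params) (T : stype) (a b c d : R) : Prop :=
  match T with
  | E00_00 => a = 0 /\ b = 0 /\ c = 0 /\ d = 0
  | E00_0 i => a = 0 /\ b = 0 /\ c = 0 /\ d = (S2in p - lam2 p i (D2 p)) / k3 p
  | E00_10 => a = 0 /\ b = 0 /\ c = (S1in p - lam1 p (D2 p)) / k1 p /\ d = 0
  | E00_1 i => a = 0 /\ b = 0 /\ c = (S1in p - lam1 p (D2 p)) / k1 p /\
               d = k2 p * (S1in p - F p i2 i) / (k1 p * k3 p)
  | E10_10 => a = X11s p /\ b = 0 /\ X12_eq p c /\ d = 0
  | E10_1 i => a = X11s p /\ b = 0 /\ X12_eq p c /\
               d = (S2in p + k2 p * c - lam2 p i (D2 p)) / k3 p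
  | E0_01 i => a = 0 /\ b = (S2in p - lam2 p i (D1 p)) / k3 p /\ c = 0 /\
               X22_eq p b c d
  | E0_11 i => a = 0 /\ b = (S2in p - lam2 p i (D1 p)) / k3 p /\
               c = (S1in p - lam1 p (D2 p)) / k1 p /\ X22_eq p b c d
  | E1_11 i => a = X11s p /\ b = k2 p * (S1in p - F p i1 i) / (k1 p * k3 p) /\
               X12_eq p c /\ X22_eq p b c d
  end.

Definition ss (p : params) (T : stype) (a b c d : R) : Prop :=
  steady p a b c d /\ in_domain p a b c d /\ form p T a b c d.

Definition unique_ss (p : params) (T : stype) : Prop :=
  exists a b c d, ss p T a b c d /\
    forall a' b' c' d', ss p T a' b' c' d' -> a' = a /\ b' = b /\ c' = c /\ d' = d.

Definition some_ss (p : params) (T : stype) : Prop :=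
  exists a b c d, ss p T a b c d.

Definition g22 (p : params) (b c : R) (x : R) : R :=
  mu2 p (S2in p + k2 p * c - k3 p * x) - D2 p * (x - b) / x.

(** Genericity: every steady state of type T is nondegenerate, i.e. X_2^{2*}
    is a simple zero of g22. *)
Definition generic (p : params) (T : stype) : Prop :=
  forall a b c d, ss p T a b c d -> Derive (g22 p b c) d <> 0.

Definition odd_number_ss (p : params) (T : stype) : Prop :=
  exists l : list (R * R * R * R),
    NoDup l /\ (forall a b c d, In (a, b, c, d) l <-> ss p T a b c d) /\
    Nat.odd (length l) = true.

Definition X21s (p : params) (T : stype) : R :=
  match T with
  | E0_11 i => (S2in p - lam2 p i (D1 p)) / k3 p
  | E1_11 i => k2 p * (S1in p - F p i1 i) / (k1 p * k3 p)
  | _ => 0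
  end.
Definition X12s (p : params) (T : stype) : R :=
  match T with
  | E0_11 i => (S1in p - lam1 p (D2 p)) / k1 p
  | E1_11 i => X12s_10 p
  | _ => 0
  end.
Definition x2m (p : params) (S2m : R) (T : stype) : R :=
  (S2in p + k2 p * X12s p T - S2m) / k3 p.

(* Every steady-state type fixes all components but at most one downstream
   biomass x, which solves mu (A - k x) = D (x - b) / x on [b, A / k].  The gap
   between the two sides is positive at x = b and negative at x = A / k, so a
   root exists.  If mu increases on [0, A - k b] the gap decreases, so the root is
   unique: this covers mu1 everywhere, and mu2 when A - k3 X_2^{1*} lies left of
   the peak S_2^m (for lambda_2^{11}, and exactly when X_2^{1*} > x_2^m).  If
   all roots are simple, sweeping from b to A / k while tracking the parity of
   the number of roots met shows that they are finitely many and odd in number. *)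

From Stdlib Require Import Reals Ranalysis5 List Lra ClassicalEpsilon Classical.
From Coquelicot Require Import Coquelicot.
Open Scope R_scope.

Lemma MVT_strict_incr (f df : R -> R) (a b : R) :
  (forall x, a < x < b -> is_derive f x (df x)) -> (forall x, a < x < b -> 0 < df x) ->
  (forall x, a <= x <= b -> continuity_pt f x) ->
  forall x y, a <= x -> x < y -> y <= b -> f x < f y.
Proof.
  intros Hder Hpos Hcont x y Hax Hxy Hyb.
  assert (pr : forall c, x < c < y -> derivable_pt f c).
  { intros c Hc. exists (df c). apply is_derive_Reals, Hder. lra. }
  destruct (MVT f id x y pr (fun c _ => derivable_pt_id c) Hxy) as [c [Hc Hmvt]].
  - intros c Hc. apply Hcont. lra.
  - intros c _. apply derivable_continuous_pt, derivable_pt_id.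
  - rewrite derive_pt_id, Derive_Reals in Hmvt. unfold id in Hmvt.
    rewrite (is_derive_unique f c (df c)) in Hmvt by (apply Hder; lra).
    assert (0 < df c) by (apply Hpos; lra). nra.
Qed.

Lemma MVT_strict_decr (f df : R -> R) (a b : R) :
  (forall x, a < x < b -> is_derive f x (df x)) -> (forall x, a < x < b -> df x < 0) ->
  (forall x, a <= x <= b -> continuity_pt f x) ->
  forall x y, a <= x -> x < y -> y <= b -> f y < f x.
Proof.
  intros Hder Hneg Hcont x y Hax Hxy Hyb.
  enough (- f x < - f y) by lra.
  apply (MVT_strict_incr (fun t => - f t) (fun t => - df t) a b); auto.
  - intros t Ht. apply (is_derive_opp f), Hder, Ht.
  - intros t Ht. specialize (Hneg t Ht). lra.
  - intros t Ht. apply (continuity_pt_opp f), Hcont, Ht.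
Qed.

(* [C1_Rplus] only gives right continuity at [0]; freezing [f] on [(-oo, 0]]
   makes it continuous at [0] in the two-sided sense used by [IVT_interv] and [MVT]. *)
Definition extend0 (f : R -> R) (x : R) : R := f (Rmax 0 x).

Lemma extend0_eq (f : R -> R) (x : R) : 0 <= x -> extend0 f x = f x.
Proof. intros Hx. unfold extend0. now rewrite Rmax_right. Qed.

Lemma extend0_locally (f : R -> R) (x : R) : 0 < x ->
  locally x (fun y => f y = extend0 f y).
Proof.
  intros Hx. exists (mkposreal x Hx). intros y Hy.
  assert (Hxy : Rabs (y - x) < x) by exact Hy.
  apply Rabs_def2 in Hxy. rewrite extend0_eq; lra.
Qed.

Section C1_Rplus.
Variable f : R -> R.
Hypothesis Hf : C1_Rplus f.

Lemma C1_Rplus_ex_derive (x : R) : 0 < x -> ex_derive f x.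
Proof. pose proof Hf as [df [Hd _]]. intros Hx. exists (df x). now apply Hd. Qed.

Lemma is_derive_extend0 (x : R) : 0 < x -> is_derive (extend0 f) x (Derive f x).
Proof.
  intros Hx. apply (is_derive_ext_loc f); [now apply extend0_locally|].
  now apply Derive_correct, C1_Rplus_ex_derive.
Qed.

Lemma continuity_pt_extend0 (x : R) : 0 <= x -> continuity_pt (extend0 f) x.
Proof.
  intros Hx. apply continuity_pt_filterlim.
  destruct (Rle_lt_or_eq_dec _ _ Hx) as [Hpos | <-].
  - apply (continuous_ext_loc _ f); [now apply extend0_locally|].
    apply (ex_derive_continuous (K := R_AbsRing) f), C1_Rplus_ex_derive; lra.
  - pose proof Hf as [df [_ [_ [Hright _]]]].
    apply filterlim_locally. intros eps.
    destruct (proj1 (filterlim_locally _ _) Hright eps) as [d Hd].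
    exists d. intros y Hy. unfold extend0. rewrite (Rmax_left 0 0) by lra.
    destruct (Rle_or_lt y 0) as [Hy0 | Hy0].
    + rewrite Rmax_left by lra. apply ball_center.
    + rewrite Rmax_right by lra. now apply Hd.
Qed.

Lemma C1_Rplus_strict_incr (a b : R) : 0 <= a -> (forall x, a < x < b -> 0 < Derive f x) ->
  forall x y, a <= x -> x < y -> y <= b -> f x < f y.
Proof.
  intros Ha Hpos x y Hax Hxy Hyb.
  rewrite <- (extend0_eq f x), <- (extend0_eq f y) by lra.
  apply (MVT_strict_incr _ (Derive f) a b); auto.
  - intros t Ht. apply is_derive_extend0. lra.
  - intros t Ht. apply continuity_pt_extend0. lra.
Qed.

Lemma C1_Rplus_strict_decr (a b : R) : 0 <= a -> (forall x, a < x < b -> Derive f x < 0) ->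
  forall x y, a <= x -> x < y -> y <= b -> f y < f x.
Proof.
  intros Ha Hneg x y Hax Hxy Hyb.
  rewrite <- (extend0_eq f x), <- (extend0_eq f y) by lra.
  apply (MVT_strict_decr _ (Derive f) a b); auto.
  - intros t Ht. apply is_derive_extend0. lra.
  - intros t Ht. apply continuity_pt_extend0. lra.
Qed.

End C1_Rplus.

Lemma continuity_pt_sign_locally (g : R -> R) (s : R) : continuity_pt g s -> g s <> 0 ->
  exists d, 0 < d /\ forall x, Rabs (x - s) < d -> 0 < g x * g s.
Proof.
  intros Hc Hs. assert (Heps : 0 < Rabs (g s)) by now apply Rabs_pos_lt.
  destruct (Hc _ Heps) as [d [Hd Hnear]]. exists d. split; [exact Hd|]. intros x Hx.
  destruct (Req_dec x s) as [-> | Hxs]; [exact (Rsqr_pos_lt _ Hs)|].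
  specialize (Hnear x (conj (conj I (not_eq_sym Hxs)) Hx)). simpl in Hnear. unfold R_dist in Hnear.
  apply Rabs_def2 in Hnear.
  destruct (Rdichotomy _ _ Hs);
    [rewrite (Rabs_left (g s)) in Hnear | rewrite (Rabs_right (g s)) in Hnear]; nra.
Qed.

Lemma simple_zero_sign_change (g : R -> R) (s l : R) : g s = 0 -> is_derive g s l -> l <> 0 ->
  exists d, 0 < d /\ forall x, Rabs (x - s) < d -> x <> s -> 0 < g x * l * (x - s).
Proof.
  intros Hz Hder Hl. apply is_derive_Reals in Hder.
  assert (Heps : 0 < Rabs l / 2) by (pose proof (Rabs_pos_lt _ Hl); lra).
  destruct (Hder _ Heps) as [d Hd]. exists d. split; [apply cond_pos|]. intros x Hx Hxs.
  assert (Hh : x - s <> 0) by lra.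
  specialize (Hd (x - s) Hh Hx). replace (s + (x - s)) with x in Hd by ring.
  rewrite Hz, Rminus_0_r in Hd.
  set (q := g x / (x - s)) in Hd.
  assert (Hq : 0 < q * l).
  { apply Rabs_def2 in Hd.
    destruct (Rdichotomy _ _ Hl);
      [rewrite (Rabs_left l) in Hd | rewrite (Rabs_right l) in Hd]; nra. }
  replace (g x) with (q * (x - s)) by (unfold q; field; exact Hh).
  assert (0 < (x - s) * (x - s)) by (destruct (Rle_or_lt 0 (x - s)); nra). nra.
Qed.

Section OddZeros.
Variables (g : R -> R) (a b : R).

Definition zeros_on (t : R) (l : list R) : Prop :=
  NoDup l /\ forall x, In x l <-> a <= x <= t /\ g x = 0.

Definition zero_parity (t : R) : Prop :=
  a <= t /\ g t <> 0 /\
  exists l, zeros_on t l /\ (Nat.odd (length l) = true <-> g t < 0).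

Lemma zero_parity_start : 0 < g a -> zero_parity a.
Proof.
  intros Ha. split; [lra|]. split; [lra|]. exists nil. split; [split|].
  - constructor.
  - intros x. simpl. split; [tauto|]. intros [Hx Hgx]. replace x with a in Hgx by lra. lra.
  - simpl. split; [discriminate | lra].
Qed.

Lemma zero_parity_step_nonzero (t u : R) : t <= u -> zero_parity t ->
  (forall x, t < x <= u -> g x <> 0) -> 0 < g t * g u -> zero_parity u.
Proof.
  intros Htu [Hat [Hgt [l [[Hnd Hl] Hpar]]]] Hnz Hsign.
  split; [lra|]. split; [intros E; rewrite E in Hsign; lra|].
  exists l. split; [split; [exact Hnd|]|].
  - intros x. rewrite Hl. split; intros [Hx Hgx]; split; auto; try lra.
    destruct (Rle_or_lt x t); [lra|]. exfalso. apply (Hnz x); auto. lra.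
  - rewrite Hpar. split; intros; nra.
Qed.

Lemma zero_parity_step_cross (t s u : R) : t < s < u -> zero_parity t -> g s = 0 ->
  (forall x, t < x <= u -> g x = 0 -> x = s) -> g t * g u < 0 -> zero_parity u.
Proof.
  intros Hs [Hat [Hgt [l [[Hnd Hl] Hpar]]]] Hgs Hone Hsign.
  split; [lra|]. split; [intros E; rewrite E in Hsign; lra|].
  exists (s :: l). split; [split|].
  - constructor; [|exact Hnd]. intros Hin. apply Hl in Hin. lra.
  - intros x. simpl. rewrite Hl. split.
    + intros [<- | [Hx Hgx]]; split; auto; lra.
    + intros [Hx Hgx]. destruct (Rle_or_lt x t); [right; split; auto; lra|].
      left. symmetry. apply Hone; auto; lra.
  - simpl length. rewrite Nat.odd_succ, <- Nat.negb_odd.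
    destruct (Nat.odd (length l)); simpl.
    + assert (g t < 0) by now apply Hpar. split; intros; [discriminate | nra].
    + assert (0 < g t) by (destruct (Rtotal_order (g t) 0) as [H | [H | H]];
                            [apply Hpar in H; discriminate | contradiction | exact H]).
      split; intros; [nra | reflexivity].
Qed.

Hypothesis Hab : a < b.
Hypothesis Hcont : forall x, a <= x <= b -> continuity_pt g x.
Hypothesis Hga : 0 < g a.
Hypothesis Hgb : g b < 0.
Hypothesis Hsimple : forall z, a <= z <= b -> g z = 0 -> exists l, l <> 0 /\ is_derive g z l.

Lemma zero_parity_propagates (m : R) : a <= m <= b ->
  exists d, 0 < d /\ forall t, m - d < t <= m -> zero_parity t -> zero_parity (Rmin (m + d / 2) b).
Proof.
  intros Hm. set (u := fun d => Rmin (m + d / 2) b).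
  assert (Hu : forall d, 0 < d -> m <= u d <= m + d / 2 /\ u d <= b).
  { intros d Hd. unfold u. split; [split|]; [apply Rmin_glb | apply Rmin_l | apply Rmin_r]; lra. }
  destruct (Req_dec (g m) 0) as [Hz | Hnz].
  - assert (Hmb : m < b) by (destruct (Req_dec m b); [subst; lra | lra]).
    destruct (Hsimple m Hm Hz) as [l [Hl Hder]].
    destruct (simple_zero_sign_change g m l Hz Hder Hl) as [d [Hd Hsign]].
    exists d. split; [exact Hd|]. intros t Ht Hpt. fold (u d).
    assert (Htm : t < m).
    { destruct (Req_dec t m) as [-> | ]; [destruct Hpt as [_ [Hg _]]; contradiction | lra]. }
    assert (Hmu : m < u d) by (unfold u; apply Rmin_glb_lt; lra).
    destruct (Hu d Hd) as [[_ Hud] _].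
    apply (zero_parity_step_cross t m); [split; lra | exact Hpt | exact Hz | |].
    + intros x Hx Hgx. destruct (Req_dec x m) as [| Hxm]; [assumption|].
      specialize (Hsign x ltac:(apply Rabs_def1; lra) Hxm). rewrite Hgx in Hsign. lra.
    + assert (0 < g t * l * (t - m)) by (apply Hsign; [apply Rabs_def1 | ]; lra).
      assert (0 < g (u d) * l * (u d - m)) by (apply Hsign; [apply Rabs_def1 | ]; lra).
      assert (g t * l < 0) by nra. assert (0 < g (u d) * l) by nra.
      assert (g t * g (u d) * (l * l) < 0) by nra.
      pose proof (Rsqr_pos_lt _ Hl). unfold Rsqr in *. nra.
  - destruct (continuity_pt_sign_locally g m (Hcont m Hm) Hnz) as [d [Hd Hsign]].
    exists d. split; [exact Hd|]. intros t Ht Hpt. fold (u d).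
    destruct (Hu d Hd) as [[Hmu Hud] _].
    apply (zero_parity_step_nonzero t); [lra | exact Hpt | |].
    + intros x Hx Hgx. specialize (Hsign x ltac:(apply Rabs_def1; lra)). rewrite Hgx in Hsign. lra.
    + assert (0 < g t * g m) by (apply Hsign, Rabs_def1; lra).
      assert (0 < g (u d) * g m) by (apply Hsign, Rabs_def1; lra).
      assert (0 < g t * g (u d) * (g m * g m)) by nra.
      pose proof (Rsqr_pos_lt _ Hnz). unfold Rsqr in *. nra.
Qed.

Lemma simple_zeros_odd :
  exists l, NoDup l /\ (forall x, In x l <-> a <= x <= b /\ g x = 0) /\ Nat.odd (length l) = true.
Proof.
  set (S := fun t => t <= b /\ zero_parity t).
  assert (Sa : S a) by (split; [lra | now apply zero_parity_start]).
  assert (Sbound : bound S) by (exists b; intros t [Ht _]; exact Ht).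
  destruct (completeness S Sbound (ex_intro _ a Sa)) as [m [Hub Hlub]].
  assert (Hm : a <= m <= b) by (split; [apply Hub, Sa | apply Hlub; intros t [Ht _]; exact Ht]).
  destruct (zero_parity_propagates m Hm) as [d [Hd Hprop]].
  destruct (classic (exists t, S t /\ m - d < t)) as [[t [[Htb Hpt] Ht]] | Hnone].
  2:{ exfalso. assert (m <= m - d); [|lra]. apply Hlub. intros t St.
      apply Rnot_lt_le. intros Ht. apply Hnone. now exists t. }
  assert (Htm : t <= m) by (apply Hub; split; assumption).
  assert (Hu : zero_parity (Rmin (m + d / 2) b)) by (apply (Hprop t); [split; lra | exact Hpt]).
  assert (Hub_u : Rmin (m + d / 2) b <= m) by (apply Hub; split; [apply Rmin_r | exact Hu]).
  assert (Hmin : Rmin (m + d / 2) b = b).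
  { destruct (Rle_or_lt (m + d / 2) b);
      [rewrite Rmin_left in Hub_u by lra; lra | apply Rmin_right; lra]. }
  rewrite Hmin in Hu. destruct Hu as [_ [_ [l [[Hnd Hl] Hpar]]]].
  exists l. split; [exact Hnd|]. split; [exact Hl|]. now apply Hpar.
Qed.

End OddZeros.

Section H1_facts.
Variables (mu : R -> R) (m1 : R).
Hypothesis Hmu : H1 mu m1.

Lemma H1_strict_incr (x y : R) : 0 <= x -> x < y -> mu x < mu y.
Proof.
  destruct Hmu as [HC [_ [_ Hd]]]. intros Hx Hxy.
  apply (C1_Rplus_strict_incr mu HC 0 y); try lra.
  intros t Ht. apply Hd. lra.
Qed.

Lemma H1_nonneg (x : R) : 0 <= x -> 0 <= mu x.
Proof.
  intros Hx. pose proof Hmu as [_ [H0 _]].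
  destruct (Rle_lt_or_eq_dec _ _ Hx) as [Hpos | <-]; [|lra].
  pose proof (H1_strict_incr 0 x (Rle_refl 0) Hpos). lra.
Qed.

End H1_facts.

Section H2_facts.
Variables (mu : R -> R) (S2m : R).
Hypothesis Hmu : H2 mu S2m.

Lemma H2_strict_incr (x y : R) : 0 <= x -> x < y -> y <= S2m -> mu x < mu y.
Proof.
  destruct Hmu as [HC [_ [_ [_ [Hd _]]]]]. intros Hx Hxy Hy.
  apply (C1_Rplus_strict_incr mu HC 0 S2m); try lra.
  intros t Ht. apply Hd. lra.
Qed.

Lemma H2_strict_decr (x y : R) : S2m <= x -> x < y -> mu y < mu x.
Proof.
  destruct Hmu as [HC [_ [_ [HS [_ Hd]]]]]. intros Hx Hxy.
  apply (C1_Rplus_strict_decr mu HC S2m y); try lra.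
  intros t Ht. apply Hd. lra.
Qed.

Lemma H2_injective_rise (x y : R) : 0 <= x <= S2m -> 0 <= y <= S2m -> mu x = mu y -> x = y.
Proof.
  intros Hx Hy E. destruct (Rtotal_order x y) as [Hl | [Hl | Hl]]; auto; exfalso.
  - pose proof (H2_strict_incr x y ltac:(lra) Hl ltac:(lra)). lra.
  - pose proof (H2_strict_incr y x ltac:(lra) Hl ltac:(lra)). lra.
Qed.

Lemma H2_injective_fall (x y : R) : S2m <= x -> S2m <= y -> mu x = mu y -> x = y.
Proof.
  intros Hx Hy E. destruct (Rtotal_order x y) as [Hl | [Hl | Hl]]; auto; exfalso.
  - pose proof (H2_strict_decr x y Hx Hl). lra.
  - pose proof (H2_strict_decr y x Hy Hl). lra.
Qed.

(* Beyond [S2m], [mu] decreases to its limit [0], so it stays above it. *)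
Lemma H2_pos (x : R) : 0 < x -> 0 < mu x.
Proof.
  intros Hx. pose proof Hmu as [_ [H0 [Hlim _]]].
  destruct (Rle_or_lt x S2m) as [Hle | Hgt].
  - pose proof (H2_strict_incr 0 x (Rle_refl 0) Hx Hle). lra.
  - apply Rnot_le_lt. intros Hneg.
    pose proof (H2_strict_decr x (x + 1) ltac:(lra) ltac:(lra)) as Hdrop.
    assert (Hle : Rbar_le 0 (mu (x + 1))).
    { apply (is_lim_le_loc mu (fun _ => mu (x + 1)) p_infty); [| exact Hlim | apply is_lim_const].
      exists (x + 1). intros y Hy. left. apply H2_strict_decr; lra. }
    simpl in Hle. lra.
Qed.

Lemma H2_nonneg (x : R) : 0 <= x -> 0 <= mu x.
Proof.
  intros Hx. destruct (Rle_lt_or_eq_dec _ _ Hx) as [Hpos | <-].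
  - pose proof (H2_pos x Hpos). lra.
  - pose proof Hmu as [_ [H0 _]]. lra.
Qed.

End H2_facts.

Lemma level_positive (mu : R -> R) (Di S : R) : mu 0 = 0 -> 0 < Di -> 0 <= S -> mu S = Di -> 0 < S.
Proof.
  intros H0 HD HS E. destruct (Rle_lt_or_eq_dec _ _ HS) as [| <-]; [assumption|]. lra.
Qed.

Section H2_levels.
Variables (mu : R -> R) (S2m Di : R).
Hypothesis Hmu : H2 mu S2m.
Hypothesis HDi : 0 < Di.
Hypothesis Hlevel : exists S, 0 <= S /\ mu S = Di.

Lemma H2_level_on_rise : exists S, 0 <= S <= S2m /\ mu S = Di.
Proof.
  destruct Hlevel as [S0 [HS0 E0]]. pose proof Hmu as [HC [H0 [_ [HS _]]]].
  destruct (Rle_or_lt S0 S2m) as [Hle | Hgt]; [exists S0; split; [lra | exact E0]|].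
  pose proof (H2_strict_decr mu S2m Hmu S2m S0 (Rle_refl _) Hgt) as Hpeak.
  destruct (IVT_interv (fun x => extend0 mu x - Di) 0 S2m) as [z [Hz Ez]]; [| exact HS | | |].
  - intros x Hx. apply continuity_pt_minus.
    + apply continuity_pt_extend0; [exact HC | lra].
    + apply continuity_pt_const. intros u v. reflexivity.
  - rewrite extend0_eq; lra.
  - rewrite extend0_eq; lra.
  - exists z. rewrite extend0_eq in Ez by lra. split; [exact Hz | lra].
Qed.

Lemma H2_smallest_level :
  exists S, 0 <= S /\ mu S = Di /\ forall S', 0 <= S' -> mu S' = Di -> S <= S'.
Proof.
  destruct H2_level_on_rise as [S1 [HS1 E1]]. exists S1. split; [lra|]. split; [exact E1|].
  intros S' HS' E'. destruct (Rle_or_lt S' S2m); [|lra].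
  right. apply (H2_injective_rise mu S2m Hmu); [lra | lra | congruence].
Qed.

Lemma H2_largest_level :
  exists S, 0 <= S /\ mu S = Di /\ forall S', 0 <= S' -> mu S' = Di -> S' <= S.
Proof.
  destruct (classic (exists S, S2m <= S /\ mu S = Di)) as [[S [HS E]] | Hnone].
  - pose proof Hmu as [_ [_ [_ [HS2m _]]]].
    exists S. split; [lra|]. split; [exact E|]. intros S' HS' E'.
    destruct (Rle_or_lt S2m S'); [right; apply (H2_injective_fall mu S2m Hmu); congruence | lra].
  - destruct H2_level_on_rise as [S1 [HS1 E1]]. exists S1. split; [lra|]. split; [exact E1|].
    intros S' HS' E'. destruct (Rle_or_lt S' S2m).
    + right. apply (H2_injective_rise mu S2m Hmu); [lra | lra | congruence].
    + exfalso. apply Hnone. exists S'. split; [lra | exact E'].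
Qed.

End H2_levels.

Lemma lam2_spec (p : params) (S2m : R) (j : idx) (Di : R) :
  H2 (mu2 p) S2m -> 0 < Di -> lam2_fin p Di ->
  0 < lam2 p j Di /\ mu2 p (lam2 p j Di) = Di /\ (j = i1 -> lam2 p j Di <= S2m).
Proof.
  intros Hmu HD Hfin. pose proof Hmu as [_ [H0 _]].
  assert (Hlow : lam2 p i1 Di <= S2m).
  { destruct (H2_level_on_rise _ _ _ Hmu HD Hfin) as [S1 [HS1 E1]].
    destruct (epsilon_spec (inhabits 0) _ (H2_smallest_level _ _ _ Hmu HD Hfin)) as [_ [_ Hmin]].
    specialize (Hmin S1 ltac:(lra) E1). simpl. lra. }
  destruct j.
  - destruct (epsilon_spec (inhabits 0) _ (H2_smallest_level _ _ _ Hmu HD Hfin)) as [HS [E _]].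
    split; [apply (level_positive (mu2 p) Di); assumption|].
    split; [exact E | intros _; exact Hlow].
  - destruct (epsilon_spec (inhabits 0) _ (H2_largest_level _ _ _ Hmu HD Hfin)) as [HS [E _]].
    split; [apply (level_positive (mu2 p) Di); assumption|]. split; [exact E | discriminate].
Qed.

(* The equation [mu (A - k x) = D (x - b) / x] for the downstream biomass:
   [X_1^{2*}] solves it with [mu = mu1], [A = S1in], [b = X_1^{1*}], and
   [X_2^{2*}] with [mu = mu2], [A = S2in + k2 X_1^{2*}], [b = X_2^{1*}]. *)
Definition transfer_gap (mu : R -> R) (A k D b x : R) : R :=
  mu (A - k * x) - D * (x - b) / x.

Definition transfer_sol (mu : R -> R) (A k D b x : R) : Prop :=
  0 < x /\ 0 <= A - k * x /\ mu (A - k * x) = D * (x - b) / x.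

Lemma transfer_rhs_strict_incr (D b x y : R) : 0 < D -> 0 < b -> 0 < x -> x < y ->
  D * (x - b) / x < D * (y - b) / y.
Proof.
  intros HD Hb Hx Hxy.
  replace (D * (x - b) / x) with (D - D * b * / x) by (field; lra).
  replace (D * (y - b) / y) with (D - D * b * / y) by (field; lra).
  assert (/ y < / x) by (apply Rinv_lt_contravar; nra).
  assert (0 < D * b) by nra. nra.
Qed.

Section Transfer.
Variables (mu : R -> R) (A k D b : R).
Hypothesis Hmu : C1_Rplus mu.
Hypothesis Hmu0 : mu 0 = 0.
Hypothesis Hmu_nonneg : forall x, 0 <= x -> 0 <= mu x.
Hypothesis Hk : 0 < k.
Hypothesis HD : 0 < D.
Hypothesis Hb : 0 < b.
Hypothesis Hroom : 0 < A - k * b.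
Hypothesis Hstart : 0 < mu (A - k * b).

Let gap (x : R) : R := extend0 mu (A - k * x) - D * (x - b) / x.
Let xmax : R := A / k.

Lemma transfer_xmax : k * xmax = A.
Proof. unfold xmax. field. lra. Qed.

Lemma transfer_sol_gt (x : R) : transfer_sol mu A k D b x -> b < x.
Proof.
  intros [Hx [Hdom E]]. apply Rnot_le_lt. intros Hle.
  pose proof (Hmu_nonneg _ Hdom).
  destruct (Rle_lt_or_eq_dec _ _ Hle) as [Hlt | ->].
  - assert (D * (x - b) / x < 0); [|lra].
    apply Rdiv_neg_pos; [nra | exact Hx].
  - rewrite Rminus_eq_0 in E. unfold Rdiv in E. rewrite Rmult_0_r, Rmult_0_l in E. lra.
Qed.

Lemma transfer_sol_iff_gap (x : R) : transfer_sol mu A k D b x <-> b <= x <= xmax /\ gap x = 0.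
Proof.
  pose proof transfer_xmax.
  split.
  - intros Hsol. pose proof (transfer_sol_gt x Hsol) as Hbx. destruct Hsol as [Hx [Hdom E]].
    split; [split; nra|]. unfold gap. rewrite extend0_eq by exact Hdom. lra.
  - intros [Hx Hz]. assert (Hdom : 0 <= A - k * x) by nra.
    unfold gap in Hz. rewrite extend0_eq in Hz by exact Hdom.
    split; [lra|]. split; [exact Hdom | lra].
Qed.

Lemma transfer_gap_bounds : b < xmax /\ 0 < gap b /\ gap xmax < 0.
Proof.
  pose proof transfer_xmax. assert (Hbx : b < xmax) by nra.
  split; [exact Hbx | split]; unfold gap.
  - rewrite extend0_eq, Rminus_eq_0 by lra. unfold Rdiv. rewrite Rmult_0_r, Rmult_0_l. lra.
  - replace (A - k * xmax) with 0 by lra. rewrite extend0_eq, Hmu0 by lra.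
    assert (0 < D * (xmax - b) / xmax) by (apply Rdiv_lt_0_compat; nra). lra.
Qed.

Lemma continuity_pt_transfer_gap (x : R) : b <= x <= xmax -> continuity_pt gap x.
Proof.
  intros Hx. pose proof transfer_xmax. assert (Hdom : 0 <= A - k * x) by nra.
  apply continuity_pt_minus.
  - apply (continuity_pt_comp (fun x => A - k * x) (extend0 mu)).
    + apply derivable_continuous_pt. apply ex_derive_Reals_0. auto_derive. exact I.
    + now apply continuity_pt_extend0.
  - apply derivable_continuous_pt. apply ex_derive_Reals_0. auto_derive. lra.
Qed.

Lemma transfer_sol_exists : exists x, transfer_sol mu A k D b x.
Proof.
  destruct transfer_gap_bounds as [Hbx [Hgb Hgx]].
  destruct (IVT_interv (fun x => - gap x) b xmax) as [z [Hz Ez]]; [| exact Hbx | lra | lra |].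
  - intros x Hx. apply (continuity_pt_opp gap). now apply continuity_pt_transfer_gap.
  - exists z. apply transfer_sol_iff_gap. split; [exact Hz | lra].
Qed.

(* On the solution range [b < x <= A / k] the left side then decreases in [x]
   while the right side increases. *)
Lemma transfer_sol_unique :
  (forall u v, 0 <= u -> u < v -> v <= A - k * b -> mu u < mu v) ->
  forall x y, transfer_sol mu A k D b x -> transfer_sol mu A k D b y -> x = y.
Proof.
  intros Hincr.
  assert (Hmono : forall x y, transfer_sol mu A k D b x -> transfer_sol mu A k D b y -> ~ x < y).
  { intros x y Hsx Hsy Hxy. pose proof (transfer_sol_gt x Hsx).
    destruct Hsx as [Hx [_ Ex]]. destruct Hsy as [Hy [Hdy Ey]].
    pose proof (Hincr (A - k * y) (A - k * x) Hdy ltac:(nra) ltac:(nra)).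
    pose proof (transfer_rhs_strict_incr D b x y HD Hb Hx Hxy). lra. }
  intros x y Hx Hy. destruct (Rtotal_order x y) as [Hl | [Hl | Hl]]; [|exact Hl|]; exfalso.
  - exact (Hmono x y Hx Hy Hl).
  - exact (Hmono y x Hy Hx Hl).
Qed.

Lemma is_derive_transfer_gap (z : R) : b < z < xmax ->
  is_derive gap z (Derive (transfer_gap mu A k D b) z).
Proof.
  intros Hz. pose proof transfer_xmax. assert (Hinner : 0 < A - k * z) by nra.
  apply (is_derive_ext_loc (transfer_gap mu A k D b)).
  - assert (Hr : 0 < Rmin z (xmax - z)) by (apply Rmin_glb_lt; lra).
    exists (mkposreal _ Hr). intros t Ht.
    assert (Htz : Rabs (t - z) < Rmin z (xmax - z)) by exact Ht.
    apply Rabs_def2 in Htz. pose proof (Rmin_l z (xmax - z)). pose proof (Rmin_r z (xmax - z)).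
    unfold gap, transfer_gap. rewrite extend0_eq; [reflexivity | nra].
  - apply Derive_correct. unfold transfer_gap. auto_derive. split; [|lra].
    now apply C1_Rplus_ex_derive.
Qed.

Lemma transfer_sol_odd :
  (forall x, transfer_sol mu A k D b x -> Derive (transfer_gap mu A k D b) x <> 0) ->
  exists l, NoDup l /\ (forall x, In x l <-> transfer_sol mu A k D b x) /\
    Nat.odd (length l) = true.
Proof.
  intros Hsimple. destruct transfer_gap_bounds as [Hbx [Hgb Hgx]].
  destruct (simple_zeros_odd gap b xmax) as [l [Hnd [Hl Hodd]]]; auto.
  - exact continuity_pt_transfer_gap.
  - intros z Hz Ez. assert (Hsol : transfer_sol mu A k D b z) by now apply transfer_sol_iff_gap.
    assert (Hzx : z <> xmax) by (intros ->; lra).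
    pose proof (transfer_sol_gt z Hsol).
    exists (Derive (transfer_gap mu A k D b) z). split; [now apply Hsimple|].
    apply is_derive_transfer_gap. destruct Hz; split; lra.
  - exists l. split; [exact Hnd|]. split; [|exact Hodd].
    intros x. rewrite Hl. symmetry. apply transfer_sol_iff_gap.
Qed.

End Transfer.

Lemma transfer_balance (m D b x : R) : 0 < x -> m = D * (x - b) / x -> D * (b - x) + m * x = 0.
Proof. intros Hx ->. field. lra. Qed.

Section Families.
Variables (p : params) (T : stype) (a0 b0 c0 : R) (P : R -> Prop).
Hypothesis Hchar : forall a b c d, ss p T a b c d <-> a = a0 /\ b = b0 /\ c = c0 /\ P d.

Lemma family_some_ss : (exists d, P d) -> some_ss p T.
Proof. intros [d Hd]. exists a0, b0, c0, d. now apply Hchar. Qed.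

Lemma family_unique_ss : (exists d, P d) -> (forall d d', P d -> P d' -> d = d') -> unique_ss p T.
Proof.
  intros [d Hd] Huniq. exists a0, b0, c0, d. split; [now apply Hchar|].
  intros a b c d' Hss. apply Hchar in Hss as (-> & -> & -> & Hd'). repeat split. now apply Huniq.
Qed.

Lemma family_odd_number_ss :
  (exists l, NoDup l /\ (forall d, In d l <-> P d) /\ Nat.odd (length l) = true) ->
  odd_number_ss p T.
Proof.
  intros [l [Hnd [Hl Hodd]]]. exists (map (fun d => (a0, b0, c0, d)) l). split; [|split].
  - apply NoDup_map_NoDup_ForallPairs; [|exact Hnd]. intros x y _ _ E. now injection E.
  - intros a b c d. rewrite in_map_iff, Hchar, <- Hl. split.
    + intros [x [E Hx]]. injection E as -> -> -> ->. now repeat split.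
    + intros (-> & -> & -> & Hd). now exists d.
  - now rewrite length_map.
Qed.

Lemma family_generic : generic p T -> forall d, P d -> Derive (g22 p b0 c0) d <> 0.
Proof. intros Hgen d Hd. apply (Hgen a0 b0 c0 d). now apply Hchar. Qed.

End Families.

Lemma unique_ss_of_point (p : params) (T : stype) (a0 b0 c0 d0 : R) : ss p T a0 b0 c0 d0 ->
  (forall a b c d, form p T a b c d -> a = a0 /\ b = b0 /\ c = c0 /\ d = d0) -> unique_ss p T.
Proof.
  intros Hss Hform. exists a0, b0, c0, d0. split; [exact Hss|].
  intros a b c d [_ [_ Hf]]. now apply Hform.
Qed.

Definition upstream_steady (p : params) (a b c : R) : Prop :=
  (mu1 p (S1in p - k1 p * a) - D1 p) * a = 0 /\
  (mu2 p (S2in p + k2 p * a - k3 p * b) - D1 p) * b = 0 /\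
  D2 p * (a - c) + mu1 p (S1in p - k1 p * c) * c = 0 /\
  0 <= a /\ 0 <= b /\ 0 <= c /\
  0 <= S1in p - k1 p * a /\ 0 <= S2in p + k2 p * a - k3 p * b /\ 0 <= S1in p - k1 p * c.

Lemma ss_downstream_iff (p : params) (T : stype) (a0 b0 c0 : R) :
  upstream_steady p a0 b0 c0 ->
  (forall a b c d, form p T a b c d <-> a = a0 /\ b = b0 /\ c = c0 /\ X22_eq p b0 c0 d) ->
  forall a b c d, ss p T a b c d <->
    a = a0 /\ b = b0 /\ c = c0 /\ transfer_sol (mu2 p) (S2in p + k2 p * c0) (k3 p) (D2 p) b0 d.
Proof.
  intros (E1 & E2 & E3 & Ha & Hb & Hc & Hda & Hdb & Hdc) Hform a b c d.
  unfold ss. rewrite Hform. split.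
  - intros [_ [(_ & _ & _ & _ & _ & _ & _ & Hdd) (-> & -> & -> & [Hd E])]].
    repeat split; assumption.
  - intros (-> & -> & -> & Hd & Hdd & E). split; [|split].
    + repeat split; try assumption. now apply transfer_balance.
    + repeat split; try assumption. lra.
    + repeat split. exact Hd. exact E.
Qed.

Section Model.
Variables (p : params) (m1 S2m : R).
Hypothesis Hp : params_ok p.
Hypothesis Hmu1 : H1 (mu1 p) m1.
Hypothesis Hmu2 : H2 (mu2 p) S2m.

Lemma D1_pos : 0 < D1 p.
Proof. destruct Hp as (_ & _ & _ & HD & Hr & _). unfold D1. apply Rdiv_lt_0_compat; lra. Qed.

Lemma D2_pos : 0 < D2 p.
Proof. destruct Hp as (_ & _ & _ & HD & Hr & Hr1 & _). unfold D2. apply Rdiv_lt_0_compat; lra. Qed.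

Lemma lam1_spec (Di : R) : 0 < Di -> lam1_fin p Di -> 0 < lam1 p Di /\ mu1 p (lam1 p Di) = Di.
Proof.
  intros HD Hfin. pose proof Hmu1 as [_ [H0 _]].
  destruct (epsilon_spec (inhabits 0) _ Hfin) as [HS E].
  split; [apply (level_positive (mu1 p) Di); assumption | exact E].
Qed.

Lemma X11s_level : lam1_fin p (D1 p) -> S1in p > lam1 p (D1 p) ->
  0 < X11s p /\ S1in p - k1 p * X11s p = lam1 p (D1 p) /\ 0 < lam1 p (D1 p) /\
  mu1 p (lam1 p (D1 p)) = D1 p.
Proof.
  intros Hfin Hs. destruct Hp as (Hk1 & _).
  destruct (lam1_spec (D1 p) D1_pos Hfin) as [HL EL].
  split; [unfold X11s; apply Rdiv_lt_0_compat; lra|].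
  split; [unfold X11s; field; lra|]. split; assumption.
Qed.

Lemma X12s_10_spec : lam1_fin p (D1 p) -> S1in p > lam1 p (D1 p) ->
  X11s p < X12s_10 p /\ X12_eq p (X12s_10 p) /\ forall c, X12_eq p c -> c = X12s_10 p.
Proof.
  intros Hfin Hs. destruct Hp as (Hk1 & _).
  destruct (X11s_level Hfin Hs) as (HX & EX & HL & EL).
  pose proof Hmu1 as [HC [H0 _]].
  assert (Hnn : forall x, 0 <= x -> 0 <= mu1 p x) by exact (H1_nonneg _ _ Hmu1).
  assert (Hroom : 0 < S1in p - k1 p * X11s p) by lra.
  assert (Hstart : 0 < mu1 p (S1in p - k1 p * X11s p)) by (rewrite EX, EL; exact D1_pos).
  assert (Hex : exists x, X12_eq p x)
    by exact (transfer_sol_exists _ _ _ _ _ HC H0 Hnn Hk1 D2_pos HX Hroom Hstart).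
  assert (Huniq : forall x y, X12_eq p x -> X12_eq p y -> x = y).
  { apply (transfer_sol_unique _ _ _ _ _ Hnn Hk1 D2_pos HX Hstart).
    intros u v Hu Huv _. now apply (H1_strict_incr _ m1). }
  pose proof (epsilon_spec (inhabits 0) _ Hex) as Hspec.
  split; [exact (transfer_sol_gt _ _ _ _ _ Hnn D2_pos Hstart _ Hspec)|]. split; [exact Hspec|].
  intros c Hc. now apply Huniq.
Qed.

Lemma X12s_10_steady : lam1_fin p (D1 p) -> S1in p > lam1 p (D1 p) ->
  0 < X12s_10 p /\ 0 <= S1in p - k1 p * X12s_10 p /\
  D2 p * (X11s p - X12s_10 p) + mu1 p (S1in p - k1 p * X12s_10 p) * X12s_10 p = 0.
Proof.
  intros Hfin Hs. destruct (X12s_10_spec Hfin Hs) as (_ & [Hc [Hdc E]] & _).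
  split; [exact Hc|]. split; [exact Hdc|]. now apply transfer_balance.
Qed.

Lemma unique_ss_E00_00 : unique_ss p E00_00.
Proof.
  destruct Hp as (Hk1 & Hk2 & Hk3 & _ & _ & _ & HS1 & HS2).
  apply (unique_ss_of_point p _ 0 0 0 0); [|intros a b c d Hf; exact Hf].
  unfold ss, steady, in_domain, form. repeat split; try ring; nra.
Qed.

Lemma unique_ss_E00_0 (i : idx) : exist_cond p (E00_0 i) -> unique_ss p (E00_0 i).
Proof.
  intros [Hfin Hs]. destruct Hp as (Hk1 & Hk2 & Hk3 & _ & _ & _ & HS1 & HS2).
  destruct (lam2_spec p S2m i (D2 p) Hmu2 D2_pos Hfin) as (HL & EL & _).
  set (L := lam2 p i (D2 p)) in *. set (d0 := (S2in p - L) / k3 p).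
  assert (Hd0 : 0 < d0) by (apply Rdiv_lt_0_compat; lra).
  assert (Ed0 : S2in p + k2 p * 0 - k3 p * d0 = L) by (unfold d0; field; lra).
  apply (unique_ss_of_point p _ 0 0 0 d0); [|intros a b c d Hf; exact Hf].
  unfold ss, steady, in_domain, form. rewrite Ed0, EL. repeat split; try ring; nra.
Qed.

Lemma unique_ss_E00_10 : exist_cond p E00_10 -> unique_ss p E00_10.
Proof.
  intros [Hfin Hs]. destruct Hp as (Hk1 & Hk2 & Hk3 & _ & _ & _ & HS1 & HS2).
  destruct (lam1_spec (D2 p) D2_pos Hfin) as [HL EL].
  set (L := lam1 p (D2 p)) in *. set (c0 := (S1in p - L) / k1 p).
  assert (Hc0 : 0 < c0) by (apply Rdiv_lt_0_compat; lra).
  assert (Ec0 : S1in p - k1 p * c0 = L) by (unfold c0; field; lra).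
  apply (unique_ss_of_point p _ 0 0 c0 0); [|intros a b c d Hf; exact Hf].
  unfold ss, steady, in_domain, form. rewrite Ec0, EL. repeat split; try ring; nra.
Qed.

Lemma unique_ss_E00_1 (i : idx) : exist_cond p (E00_1 i) -> unique_ss p (E00_1 i).
Proof.
  intros (Hfin1 & Hfin2 & Hs1 & Hs2). destruct Hp as (Hk1 & Hk2 & Hk3 & _ & _ & _ & HS1 & HS2).
  destruct (lam1_spec (D2 p) D2_pos Hfin1) as [HL1 EL1].
  destruct (lam2_spec p S2m i (D2 p) Hmu2 D2_pos Hfin2) as (HL2 & EL2 & _).
  unfold F in *. simpl Dlev in *.
  set (L1 := lam1 p (D2 p)) in *. set (L2 := lam2 p i (D2 p)) in *.
  set (c0 := (S1in p - L1) / k1 p).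
  set (d0 := k2 p * (S1in p - (L1 + k1 p / k2 p * (L2 - S2in p))) / (k1 p * k3 p)).
  assert (Hc0 : 0 < c0) by (apply Rdiv_lt_0_compat; lra).
  assert (Hd0 : 0 < d0) by (apply Rdiv_lt_0_compat; [apply Rmult_lt_0_compat|]; nra).
  assert (Ec0 : S1in p - k1 p * c0 = L1) by (unfold c0; field; lra).
  assert (Ed0 : S2in p + k2 p * c0 - k3 p * d0 = L2) by (unfold c0, d0; field; lra).
  apply (unique_ss_of_point p _ 0 0 c0 d0); [|intros a b c d Hf; exact Hf].
  unfold ss, steady, in_domain, form. rewrite Ec0, EL1, Ed0, EL2. repeat split; try ring; nra.
Qed.

Lemma unique_ss_E10_10 : exist_cond p E10_10 -> unique_ss p E10_10.
Proof.
  intros [Hfin Hs]. destruct Hp as (Hk1 & Hk2 & Hk3 & _ & _ & _ & HS1 & HS2).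
  destruct (X11s_level Hfin Hs) as (HX & EX & HL & EL).
  destruct (X12s_10_spec Hfin Hs) as (_ & Hc & Huniq).
  destruct (X12s_10_steady Hfin Hs) as (Hc0 & Hdc & E3).
  apply (unique_ss_of_point p _ (X11s p) 0 (X12s_10 p) 0).
  - unfold ss, steady, in_domain, form. rewrite EX, EL.
    repeat split; try ring; try nra; first [exact E3 | apply Hc].
  - intros a b c d (-> & -> & Hc' & ->). apply Huniq in Hc'. now repeat split.
Qed.

Lemma unique_ss_E10_1 (i : idx) : exist_cond p (E10_1 i) -> unique_ss p (E10_1 i).
Proof.
  intros (Hfin & Hs & Hfin2 & Hs2). destruct Hp as (Hk1 & Hk2 & Hk3 & _ & _ & _ & HS1 & HS2).
  destruct (X11s_level Hfin Hs) as (HX & EX & HL & EL).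
  destruct (X12s_10_spec Hfin Hs) as (_ & Hc & Huniq).
  destruct (X12s_10_steady Hfin Hs) as (Hc0 & Hdc & E3).
  destruct (lam2_spec p S2m i (D2 p) Hmu2 D2_pos Hfin2) as (HL2 & EL2 & _).
  set (L2 := lam2 p i (D2 p)) in *. set (c0 := X12s_10 p) in *.
  set (d0 := (S2in p + k2 p * c0 - L2) / k3 p).
  assert (Hd0 : 0 < d0) by (apply Rdiv_lt_0_compat; lra).
  assert (Ed0 : S2in p + k2 p * c0 - k3 p * d0 = L2) by (unfold d0; field; lra).
  apply (unique_ss_of_point p _ (X11s p) 0 c0 d0).
  - unfold ss, steady, in_domain, form. rewrite EX, EL, Ed0, EL2.
    repeat split; try ring; try nra; first [exact E3 | apply Hc].
  - intros a b c d (-> & -> & Hc' & ->). apply Huniq in Hc'. subst c. now repeat split.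
Qed.

Lemma downstream_family (T : stype) (a0 b0 c0 : R) :
  upstream_steady p a0 b0 c0 ->
  (forall a b c d, form p T a b c d <-> a = a0 /\ b = b0 /\ c = c0 /\ X22_eq p b0 c0 d) ->
  0 < b0 -> 0 < S2in p + k2 p * c0 - k3 p * b0 ->
  some_ss p T /\ (S2in p + k2 p * c0 - k3 p * b0 <= S2m -> unique_ss p T) /\
  (generic p T -> odd_number_ss p T).
Proof.
  intros Hup Hform Hb0 Hroom. destruct Hp as (_ & _ & Hk3 & _).
  pose proof (ss_downstream_iff p T a0 b0 c0 Hup Hform) as Hchar.
  pose proof Hmu2 as [HC [H0 _]].
  pose proof (H2_nonneg _ _ Hmu2) as Hnn. pose proof (H2_pos _ _ Hmu2 _ Hroom) as Hstart.
  pose proof (transfer_sol_exists _ _ _ _ _ HC H0 Hnn Hk3 D2_pos Hb0 Hroom Hstart) as Hex.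
  split; [|split].
  - exact (family_some_ss _ _ _ _ _ _ Hchar Hex).
  - intros Hrise. apply (family_unique_ss _ _ _ _ _ _ Hchar Hex).
    apply (transfer_sol_unique _ _ _ _ _ Hnn Hk3 D2_pos Hb0 Hstart).
    intros u v Hu Huv Hv. apply (H2_strict_incr _ S2m Hmu2); lra.
  - intros Hgen. apply (family_odd_number_ss _ _ _ _ _ _ Hchar).
    apply (transfer_sol_odd _ _ _ _ _ HC H0 Hnn Hk3 D2_pos Hb0 Hroom Hstart).
    exact (family_generic _ _ _ _ _ _ Hchar Hgen).
Qed.

Lemma E0_01_family (i : idx) : exist_cond p (E0_01 i) ->
  some_ss p (E0_01 i) /\ (lam2 p i (D1 p) <= S2m -> unique_ss p (E0_01 i)) /\
  (generic p (E0_01 i) -> odd_number_ss p (E0_01 i)).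
Proof.
  intros [Hfin Hs]. destruct Hp as (Hk1 & Hk2 & Hk3 & _ & _ & _ & HS1 & HS2).
  destruct (lam2_spec p S2m i (D1 p) Hmu2 D1_pos Hfin) as (HL & EL & _).
  set (L := lam2 p i (D1 p)) in *. set (b0 := (S2in p - L) / k3 p).
  assert (Hb0 : 0 < b0) by (apply Rdiv_lt_0_compat; lra).
  assert (Eb0 : S2in p + k2 p * 0 - k3 p * b0 = L) by (unfold b0; field; lra).
  rewrite <- Eb0. apply (downstream_family _ 0 b0 0); [| | exact Hb0 | lra].
  - unfold upstream_steady. rewrite Eb0, EL. repeat split; try ring; nra.
  - intros a b c d. simpl.
    split; intros (-> & -> & -> & Hd); exact (conj eq_refl (conj eq_refl (conj eq_refl Hd))).
Qed.

Lemma unique_ss_E0_01_i1 : exist_cond p (E0_01 i1) -> unique_ss p (E0_01 i1).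
Proof.
  intros Hc. apply (E0_01_family i1 Hc). destruct Hc as [Hfin _].
  now apply (lam2_spec p S2m i1 (D1 p) Hmu2 D1_pos Hfin).
Qed.

Lemma downstream_dichotomy (T : stype) (a0 b0 c0 : R) :
  upstream_steady p a0 b0 c0 ->
  (forall a b c d, form p T a b c d <-> a = a0 /\ b = b0 /\ c = c0 /\ X22_eq p b0 c0 d) ->
  0 < b0 -> 0 < S2in p + k2 p * c0 - k3 p * b0 -> X21s p T = b0 -> X12s p T = c0 ->
  (X21s p T > x2m p S2m T -> unique_ss p T) /\
  (X21s p T < x2m p S2m T -> some_ss p T /\ (generic p T -> odd_number_ss p T)).
Proof.
  intros Hup Hform Hb0 Hroom E21 E12. destruct Hp as (_ & _ & Hk3 & _).
  destruct (downstream_family T a0 b0 c0 Hup Hform Hb0 Hroom) as (Hsome & Huniq & Hodd).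
  assert (Ex2m : k3 p * x2m p S2m T = S2in p + k2 p * c0 - S2m)
    by (unfold x2m; rewrite E12; field; lra).
  rewrite E21. split.
  - intros Hgt. apply Huniq. nra.
  - intros _. split; assumption.
Qed.

Lemma E0_11_dichotomy (i : idx) : exist_cond p (E0_11 i) ->
  (X21s p (E0_11 i) > x2m p S2m (E0_11 i) -> unique_ss p (E0_11 i)) /\
  (X21s p (E0_11 i) < x2m p S2m (E0_11 i) ->
     some_ss p (E0_11 i) /\ (generic p (E0_11 i) -> odd_number_ss p (E0_11 i))).
Proof.
  intros (Hfin1 & Hs1 & Hfin & Hs). destruct Hp as (Hk1 & Hk2 & Hk3 & _ & _ & _ & HS1 & HS2).
  destruct (lam1_spec (D2 p) D2_pos Hfin1) as [HL1 EL1].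
  destruct (lam2_spec p S2m i (D1 p) Hmu2 D1_pos Hfin) as (HL & EL & _).
  set (L1 := lam1 p (D2 p)) in *. set (L := lam2 p i (D1 p)) in *.
  set (b0 := (S2in p - L) / k3 p). set (c0 := (S1in p - L1) / k1 p).
  assert (Hb0 : 0 < b0) by (apply Rdiv_lt_0_compat; lra).
  assert (Hc0 : 0 < c0) by (apply Rdiv_lt_0_compat; lra).
  assert (Eb0 : S2in p + k2 p * 0 - k3 p * b0 = L) by (unfold b0; field; lra).
  assert (Ec0 : S1in p - k1 p * c0 = L1) by (unfold c0; field; lra).
  apply (downstream_dichotomy _ 0 b0 c0); [| | exact Hb0 | nra | reflexivity | reflexivity].
  - unfold upstream_steady. rewrite Eb0, EL, Ec0, EL1. repeat split; try ring; nra.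
  - intros a b c d. simpl.
    split; intros (-> & -> & -> & Hd); exact (conj eq_refl (conj eq_refl (conj eq_refl Hd))).
Qed.

Lemma E1_11_dichotomy (i : idx) : exist_cond p (E1_11 i) ->
  (X21s p (E1_11 i) > x2m p S2m (E1_11 i) -> unique_ss p (E1_11 i)) /\
  (X21s p (E1_11 i) < x2m p S2m (E1_11 i) ->
     some_ss p (E1_11 i) /\ (generic p (E1_11 i) -> odd_number_ss p (E1_11 i))).
Proof.
  intros (Hfin1 & Hfin & Hs1 & Hs). destruct Hp as (Hk1 & Hk2 & Hk3 & _ & _ & _ & HS1 & HS2).
  destruct (X11s_level Hfin1 Hs1) as (HX & EX & HL1 & EL1).
  destruct (X12s_10_spec Hfin1 Hs1) as (Hlt & Hc & Huniq).
  destruct (X12s_10_steady Hfin1 Hs1) as (Hc0 & Hdc & E3).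
  destruct (lam2_spec p S2m i (D1 p) Hmu2 D1_pos Hfin) as (HL & EL & _).
  unfold F in Hs. simpl Dlev in Hs.
  set (L1 := lam1 p (D1 p)) in *. set (L := lam2 p i (D1 p)) in *.
  set (b0 := k2 p * (S1in p - (L1 + k1 p / k2 p * (L - S2in p))) / (k1 p * k3 p)).
  assert (Hb0 : 0 < b0) by (apply Rdiv_lt_0_compat; [apply Rmult_lt_0_compat|]; nra).
  assert (Eb0 : S2in p + k2 p * X11s p - k3 p * b0 = L).
  { replace (X11s p) with ((S1in p - L1) / k1 p) by reflexivity. unfold b0. field. lra. }
  apply (downstream_dichotomy _ (X11s p) b0 (X12s_10 p));
    [| | exact Hb0 | nra | reflexivity | reflexivity].
  - unfold upstream_steady. rewrite EX, EL1, Eb0, EL. repeat split; try ring; nra.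
  - intros a b c d. simpl. unfold F. simpl Dlev. fold L1 L b0. split.
    + intros (-> & -> & Hc' & Hd). apply Huniq in Hc' as ->.
      exact (conj eq_refl (conj eq_refl (conj eq_refl Hd))).
    + intros (-> & -> & -> & Hd). exact (conj eq_refl (conj eq_refl (conj Hc Hd))).
Qed.

End Model.

Theorem proposition3p2 (p : params) (m1 S2m : R)
  (Hp : params_ok p) (Hmu1 : H1 (mu1 p) m1) (Hmu2 : H2 (mu2 p) S2m) :
  (* uniqueness: E_{00}^{kl}, E_{10}^{1l} (k = 0,1; l = 0,1,2) and E_{01}^{01} *)
  (forall T, (T = E00_00 \/ (exists i, T = E00_0 i) \/ T = E00_10 \/
              (exists i, T = E00_1 i) \/ T = E10_10 \/ (exists i, T = E10_1 i) \/
              T = E0_01 i1) ->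
     exist_cond p T -> unique_ss p T) /\
  (* E_{02}^{01}: at least i1, generically an odd number *)
  (exist_cond p (E0_01 i2) ->
     some_ss p (E0_01 i2) /\ (generic p (E0_01 i2) -> odd_number_ss p (E0_01 i2))) /\
  (* E_{0i}^{11}, E_{1i}^{11}, i = 1,2 *)
  (forall (i : idx) T, (T = E0_11 i \/ T = E1_11 i) -> exist_cond p T ->
     (X21s p T > x2m p S2m T -> unique_ss p T) /\
     (X21s p T < x2m p S2m T ->
        some_ss p T /\ (generic p T -> odd_number_ss p T))).
Proof.
  split; [|split].
  - intros T HT Hc.
    destruct HT as [-> | [[i ->] | [-> | [[i ->] | [-> | [[i ->] | ->]]]]]].
    + exact (unique_ss_E00_00 p Hp).
    + exact (unique_ss_E00_0 p S2m Hp Hmu2 i Hc).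
    + exact (unique_ss_E00_10 p m1 Hp Hmu1 Hc).
    + exact (unique_ss_E00_1 p m1 S2m Hp Hmu1 Hmu2 i Hc).
    + exact (unique_ss_E10_10 p m1 Hp Hmu1 Hc).
    + exact (unique_ss_E10_1 p m1 S2m Hp Hmu1 Hmu2 i Hc).
    + exact (unique_ss_E0_01_i1 p S2m Hp Hmu2 Hc).
  - intros Hc. destruct (E0_01_family p S2m Hp Hmu2 i2 Hc) as (Hsome & _ & Hodd).
    split; assumption.
  - intros i T [-> | ->] Hc.
    + exact (E0_11_dichotomy p m1 S2m Hp Hmu1 Hmu2 i Hc).
    + exact (E1_11_dichotomy p m1 S2m Hp Hmu1 Hmu2 i Hc).
Qed.
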